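(* Consider the two-stage robust problem $\min_{x\in\mathcal X}c_1x+\max_{u\in\mathcal U(x)}\min_{y\in\mathcal Y(x)}\hat c_2(u)y$, where $\mathcal U(x)=\{u\in\mathbb R^{n_u}_+: F(x)u\le h+Gx\}$ is nonempty and bounded for every $x\in\mathcal X$, $\mathcal Y(x)=\{y\in\mathbb R^{n_y}_+: B_2y\ge d-B_1x\}$ and $\hat c_2(u)=(\hat Eu)^\intercal+c_2$. It is equivalent to $\min_{x\in\mathcal X,\ y\in\mathcal Y(x)}c_1x+c_2y+\max_{u\in\mathcal U(x)}(\hat Eu)^\intercal y$, which is further equivalent to the single-level problem $\min\{c_1x+c_2y+(h+Gx)^\intercal\lambda:\ x\in\mathcal X,\ y\in\mathcal Y(x),\ F(x)^\intercal\lambda-\hat E^\intercal y\ge 0,\ \lambda\ge 0\}$.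
   Context: $\mathcal X=\{x\in\mathbb Z^{m_x}_+\times\mathbb R^{n_x}_+: Ax\ge b\}$; $F(x)$ is a matrix depending on $x$. The optimal value of an infeasible minimization problem is $+\infty$. Assume the mixed integer program $\min\{c_1x+\hat c_2(u)y: x\in\mathcal X,u\in\mathcal U(x),y\in\mathcal Y(x)\}$ has a finite optimal value (in particular $\mathcal Y(x)\neq\emptyset$ for some $x\in\mathcal X$). Two formulations are called equivalent if they have the same optimal value and any optimal first-stage solution of one is optimal for the other, and vice versa. *)

From HB Require Import structures.
From mathcomp Require Import all_boot all_order all_algebra.
From mathcomp Require Import all_classical all_reals all_analysis.
Set Implicit Arguments. Unset Strict Implicit. Unset Printing Implicit Defensive.
Import Order.TTheory GRing.Theory Num.Theory.
Local Open Scope classical_set_scope.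
Local Open Scope ring_scope.

Section TwoStage.
Variable R : realType.

Definition ts_cvge (k : nat) (v w : 'cV[R]_k) : Prop := forall i, w i 0 <= v i 0.

Definition ts_sdot (k : nat) (a : 'rV[R]_k) (v : 'cV[R]_k) : R := (a *m v) 0 0.

(* dimensions: x in Z^mx_+ x R^nx_+ (first mx coordinates integral),
   A x >= b has p rows; U(x) lives in R^nu with mu constraints;
   Y(x) lives in R^ny with my constraints. *)
Variables (mx nx p mu nu my ny : nat).
Variables (A : 'M[R]_(p, mx + nx)) (b : 'cV[R]_p).
Variables (F : 'cV[R]_(mx + nx) -> 'M[R]_(mu, nu)) (h : 'cV[R]_mu)
          (G : 'M[R]_(mu, mx + nx)).
Variables (B1 : 'M[R]_(my, mx + nx)) (B2 : 'M[R]_(my, ny)) (d : 'cV[R]_my).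
Variables (c1 : 'rV[R]_(mx + nx)) (c2 : 'rV[R]_ny) (Ehat : 'M[R]_(ny, nu)).

Definition ts_Xset : set 'cV[R]_(mx + nx) :=
  [set x | ts_cvge x 0 /\
           (forall i : 'I_(mx + nx), (i < mx)%N -> exists z : int, x i 0 = z%:~R) /\
           ts_cvge (A *m x) b].

Definition ts_Uset (x : 'cV[R]_(mx + nx)) : set 'cV[R]_nu :=
  [set u | ts_cvge u 0 /\ ts_cvge (h + G *m x) (F x *m u)].

Definition ts_Yset (x : 'cV[R]_(mx + nx)) : set 'cV[R]_ny :=
  [set y | ts_cvge y 0 /\ ts_cvge (B2 *m y) (d - B1 *m x)].

Definition ts_c2hat (u : 'cV[R]_nu) : 'rV[R]_ny := (Ehat *m u)^T + c2.

Local Open Scope ereal_scope.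

Definition ts_obj1 (x : 'cV[R]_(mx + nx)) : \bar R :=
  (ts_sdot c1 x)%:E +
  ereal_sup [set ereal_inf [set (ts_sdot (ts_c2hat u) y)%:E | y in ts_Yset x] | u in ts_Uset x].

Definition ts_val1 : \bar R := ereal_inf [set ts_obj1 x | x in ts_Xset].

Definition ts_opt1 (x : 'cV[R]_(mx + nx)) : Prop := ts_Xset x /\ ts_obj1 x = ts_val1.

Definition ts_obj2 (x : 'cV[R]_(mx + nx)) (y : 'cV[R]_ny) : \bar R :=
  (ts_sdot c1 x + ts_sdot c2 y)%:E +
  ereal_sup [set (ts_sdot (Ehat *m u)^T y)%:E | u in ts_Uset x].

Definition ts_val2 : \bar R :=
  ereal_inf [set ts_obj2 xy.1 xy.2 | xy in [set xy | ts_Xset xy.1 /\ ts_Yset xy.1 xy.2]].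

Definition ts_opt2 (x : 'cV[R]_(mx + nx)) : Prop :=
  exists y, [/\ ts_Xset x, ts_Yset x y & ts_obj2 x y = ts_val2].

Definition ts_feas3 (x : 'cV[R]_(mx + nx)) (y : 'cV[R]_ny) (l : 'cV[R]_mu) : Prop :=
  [/\ ts_Xset x, ts_Yset x y, ts_cvge ((F x)^T *m l - Ehat^T *m y) 0 & ts_cvge l 0].

Definition ts_obj3 (x : 'cV[R]_(mx + nx)) (y : 'cV[R]_ny) (l : 'cV[R]_mu) : R :=
  ts_sdot c1 x + ts_sdot c2 y + ts_sdot (h + G *m x)^T l.

Definition ts_val3 : \bar R :=
  ereal_inf [set (ts_obj3 t.1.1 t.1.2 t.2)%:E | t in [set t | ts_feas3 t.1.1 t.1.2 t.2]].

Definition ts_opt3 (x : 'cV[R]_(mx + nx)) : Prop :=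
  exists y l, ts_feas3 x y l /\ (ts_obj3 x y l)%:E = ts_val3.

Definition ts_valMIP : \bar R :=
  ereal_inf [set ((ts_sdot c1 t.1) + ts_sdot (ts_c2hat t.2.1) t.2.2)%:E
            | t in [set t : 'cV[R]_(mx + nx) * ('cV[R]_nu * 'cV[R]_ny) |
                    ts_Xset t.1 /\ ts_Uset t.1 t.2.1 /\ ts_Yset t.1 t.2.2]].

End TwoStage.

From HB Require Import structures.
From mathcomp Require Import all_boot all_order all_algebra.
From mathcomp Require Import all_classical all_reals all_analysis.
From mathcomp Require Import ring lra.
Set Implicit Arguments. Unset Strict Implicit. Unset Printing Implicit Defensive.
Import Order.TTheory GRing.Theory Num.Theory.
Local Open Scope classical_set_scope.
Local Open Scope ring_scope.

(* Both equivalences rest on linear programming duality, which follows from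
   Farkas' lemma, proved by Fourier-Motzkin elimination.  For fixed x
   and y, maximising (Ehat u)^T y over the nonempty bounded polytope U(x) is a
   feasible bounded LP, so its value is the minimum of the dual objective
   (h + G x)^T l over l >= 0 with F(x)^T l >= Ehat^T y: this turns (2) into (3).
   Between (1) and (2), max-min <= min-max gives one inequality.  For the other,
   an optimal pair (y, l) of the joint LP min {c2 y + (h + G x)^T l} together with
   an optimal dual multiplier u, which lies in U(x), is a saddle point:
   c2 y + (h + G x)^T l <= c2hat(u) y' for every y' in Y(x).  Finiteness of the
   mixed integer program bounds the joint LP from below and excludes optimal
   first-stage solutions x with empty Y(x). *)

Section FourierMotzkin.
Variable R : realFieldType.

Definition dotn (n : nat) (a x : nat -> R) : R := \sum_(k < n) a k * x k.

Lemma dotnS n a x : dotn n.+1 a x = dotn n a x + a n * x n.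
Proof. by rewrite /dotn big_ord_recr. Qed.

Lemma eq_dotn n a x x' : (forall k, (k < n)%N -> x k = x' k) -> dotn n a x = dotn n a x'.
Proof. by move=> xx'; apply: eq_bigr => k _; rewrite xx'. Qed.

Lemma dotn_sum n (I : finType) (w : I -> R) (a : I -> nat -> R) x :
  dotn n (fun k => \sum_i w i * a i k) x = \sum_i w i * dotn n (a i) x.
Proof.
rewrite /dotn; under eq_bigr do rewrite mulr_suml.
rewrite exchange_big; apply: eq_bigr => i _; rewrite mulr_sumr.
by apply: eq_bigr => k _; rewrite mulrA.
Qed.

Lemma sum_delta (I : finType) (i0 : I) (f : I -> R) : \sum_i (i == i0)%:R * f i = f i0.
Proof.
by rewrite (bigD1 i0) //= eqxx mul1r big1 ?addr0 // => i /negbTE ->; rewrite mul0r.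
Qed.

Lemma sum_comb (I J : finType) (y : J -> R) (M : J -> I -> R) (f : I -> R) :
  \sum_i (\sum_j y j * M j i) * f i = \sum_j y j * \sum_i M j i * f i.
Proof.
under eq_bigr do rewrite mulr_suml; rewrite exchange_big; apply: eq_bigr => j _.
by rewrite mulr_sumr; apply: eq_bigr => i _; rewrite mulrA.
Qed.

Lemma ex_between (T1 T2 : eqType) (P : seq T1) (N : seq T2) (f : T1 -> R) (g : T2 -> R) :
  {in P & N, forall p q, f p <= g q} ->
  exists t, {in P, forall p, f p <= t} /\ {in N, forall q, t <= g q}.
Proof.
elim: P => [|p P IH] fg.
  suff [t tN] : exists t, {in N, forall q, t <= g q} by exists t.
  elim: N {fg} => [|q N [t tN]]; first by exists 0.
  exists (Num.min t (g q)) => q'; rewrite inE => /orP[/eqP->|/tN q't];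
    by rewrite ge_min ?lexx ?q't ?orbT.
have [|t [tP tN]] := IH; first by move=> p' q p'P qN; apply: fg; rewrite ?inE ?p'P ?orbT.
exists (Num.max t (f p)); split.
  by move=> p'; rewrite inE => /orP[/eqP->|/tP p't]; rewrite le_max ?lexx ?p't ?orbT.
by move=> q qN; rewrite ge_max tN //= fg // mem_head.
Qed.

Section Elimination.
Variables (I : finType) (a : I -> nat -> R) (beta : I -> R) (n : nat).

Definition fm_good p q := (0 < a p n) && (a q n < 0).

(* Multipliers of the system eliminating x_n: row [inl i] keeps row i if it is
   free of x_n, row [inr (p, q)] is the nonnegative combination of rows p and q
   cancelling x_n when their coefficients of x_n have opposite signs; all other
   rows are the trivial constraint 0 <= 0. *)
Definition fm_mult (j : I + I * I) (i : I) : R :=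
  match j with
  | inl i' => (a i' n == 0)%:R * (i == i')%:R
  | inr (p, q) => (fm_good p q)%:R * (- a q n * (i == p)%:R + a p n * (i == q)%:R)
  end.

Definition fm_row j k := \sum_i fm_mult j i * a i k.
Definition fm_bound j := \sum_i fm_mult j i * beta i.

Lemma fm_mult_ge0 j i : 0 <= fm_mult j i.
Proof.
case: j => [i'|[p q]] /=; first by rewrite mulr_ge0 ?ler0n.
have [/andP[p0 q0]|_] := boolP (fm_good p q); last by rewrite mul0r.
by rewrite mul1r addr_ge0 // mulr_ge0 ?ler0n // ?oppr_ge0 ltW.
Qed.

Lemma fm_mult_inl i' f : \sum_i fm_mult (inl i') i * f i = (a i' n == 0)%:R * f i'.
Proof. by rewrite -[f i'](sum_delta i') mulr_sumr; apply: eq_bigr => i _ /=; ring. Qed.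

Lemma fm_mult_inr p q f : \sum_i fm_mult (inr (p, q)) i * f i =
  (fm_good p q)%:R * (- a q n * f p + a p n * f q).
Proof.
rewrite -[f p](sum_delta p) -[f q](sum_delta q) !mulr_sumr -big_split mulr_sumr.
by apply: eq_bigr => i _ /=; ring.
Qed.

Lemma fm_row_last j : fm_row j n = 0.
Proof.
case: j => [i'|[p q]]; rewrite /fm_row ?fm_mult_inl ?fm_mult_inr.
  by have [/eqP ->|_] := boolP (a i' n == 0); rewrite ?mulr0 ?mul0r.
by rewrite [X in _ * X](_ : _ = 0) ?mulr0 //; ring.
Qed.

Lemma fm_lift x : (forall j, fm_bound j <= dotn n (fm_row j) x) ->
  exists x', forall i, beta i <= dotn n.+1 (a i) x'.
Proof.
move=> feas; pose D i := dotn n (a i) x.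
have reduced j : fm_bound j <= \sum_i fm_mult j i * D i by rewrite -dotn_sum; apply: feas.
have [|t [tP tN]] := @ex_between _ _ (enum [pred p | 0 < a p n]) (enum [pred q | a q n < 0])
  (fun p => (beta p - D p) / a p n) (fun q => (D q - beta q) / - a q n).
  move=> p q; rewrite !mem_enum !inE => p0 q0.
  have := reduced (inr (p, q)); rewrite /fm_bound !fm_mult_inr /fm_good p0 q0 !mul1r.
  by rewrite ler_pdivrMr // mulrAC ler_pdivlMr ?oppr_gt0 //; lra.
exists (fun k => if (k < n)%N then x k else t) => i.
rewrite dotnS ltnn (@eq_dotn _ _ _ x) => [|k ->] //; rewrite -/(D i).
have [i_neg|i_pos|i_0] := ltrgtP (a i n) 0.
- have := tN i; rewrite mem_enum inE => /(_ i_neg).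
  by rewrite ler_pdivlMr ?oppr_gt0 //; lra.
- have := tP i; rewrite mem_enum inE => /(_ i_pos).
  by rewrite ler_pdivrMr //; lra.
- by have := reduced (inl i); rewrite /fm_bound !fm_mult_inl i_0 eqxx !mul1r mul0r addr0.
Qed.

End Elimination.

Theorem farkas_fourier_motzkin n (I : finType) (a : I -> nat -> R) (beta : I -> R) :
  ~ (exists x, forall i, beta i <= dotn n (a i) x) ->
  exists y : I -> R, [/\ forall i, 0 <= y i,
    forall k, (k < n)%N -> \sum_i y i * a i k = 0 & 0 < \sum_i y i * beta i].
Proof.
elim: n I a beta => [|n IH] I a beta infeas.
  have [/existsP[i bi]|no] := boolP [exists i, 0 < beta i].
    by exists (fun j => (j == i)%:R); split=> [j|k|]; rewrite ?ler0n ?sum_delta.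
  case: infeas; exists (fun _ => 0) => i; rewrite /dotn big_ord0 leNgt.
  by apply: contra no => bi; apply/existsP; exists i.
have [[x /fm_lift lifted]|/IH[y [y0 ya yb]]] :=
  pselect (exists x, forall j, fm_bound a beta n j <= dotn n (fm_row a n j) x).
  by case: infeas.
exists (fun i => \sum_j y j * fm_mult a n j i); split.
- by move=> i; apply: sumr_ge0 => j _; apply: mulr_ge0 => //; apply: fm_mult_ge0.
- move=> k; rewrite ltnS leq_eqVlt sum_comb => /orP[/eqP->|/ya //].
  by apply: big1 => j _; rewrite -/(fm_row a n j n) fm_row_last mulr0.
- by rewrite sum_comb.
Qed.
End FourierMotzkin.

Section LinearDuality.
Variable R : realFieldType.

(* [ts_cvge v w] of the statement is convertible to [cvle w v]. *)
Definition cvle m (v w : 'cV[R]_m) : Prop := forall i, v i 0 <= w i 0.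

Lemma cvle_col_mx m1 m2 (v1 w1 : 'cV[R]_m1) (v2 w2 : 'cV[R]_m2) :
  cvle (col_mx v1 v2) (col_mx w1 w2) <-> cvle v1 w1 /\ cvle v2 w2.
Proof.
split=> [le_vw|[le1 le2] i].
  by split=> i; [have := le_vw (lshift m2 i) | have := le_vw (rshift m1 i)];
    rewrite ?col_mxEu ?col_mxEd.
by rewrite -(splitK i); case: splitP => k _; rewrite ?col_mxEu ?col_mxEd.
Qed.

Lemma cvle_anti m (v w : 'cV[R]_m) : cvle v w -> cvle w v -> v = w.
Proof. by move=> le_vw le_wv; apply/colP => i; apply/le_anti; rewrite le_vw le_wv. Qed.

Lemma cvleN m (v w : 'cV[R]_m) : cvle (- v) (- w) <-> cvle w v.
Proof. by split=> le_vw i; have := le_vw i; rewrite !mxE lerN2. Qed.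

Lemma subv_ge0 m (v w : 'cV[R]_m) : cvle 0 (v - w) <-> cvle w v.
Proof. by split=> le_vw i; have := le_vw i; rewrite !mxE subr_ge0. Qed.

Lemma ler_dot m (y v w : 'cV[R]_m) :
  cvle 0 y -> cvle v w -> (y^T *m v) 0 0 <= (y^T *m w) 0 0.
Proof.
move=> y0 le_vw; rewrite !mxE; apply: ler_sum => i _; rewrite !mxE.
by apply: ler_wpM2l; [have := y0 i; rewrite mxE | apply: le_vw].
Qed.

Lemma dotC m (u v : 'cV[R]_m) : (u^T *m v) 0 0 = (v^T *m u) 0 0.
Proof. by rewrite !mxE; apply: eq_bigr => i _; rewrite !mxE mulrC. Qed.

Lemma cvle0_vsub m1 m2 (w : 'cV[R]_(m1 + m2)) :
  cvle 0 w -> cvle 0 (usubmx w) /\ cvle 0 (dsubmx w).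
Proof.
move=> w0; split=> i; rewrite !mxE;
  [have := w0 (lshift m2 i) | have := w0 (rshift m1 i)]; by rewrite mxE.
Qed.

Lemma tr_mul_col_mx m1 m2 n (w : 'cV[R]_(m1 + m2)) (X : 'M[R]_(m1, n)) (Y : 'M[R]_(m2, n)) :
  w^T *m col_mx X Y = (usubmx w)^T *m X + (dsubmx w)^T *m Y.
Proof. by rewrite -{1}(vsubmxK w) tr_col_mx mul_row_col. Qed.

Theorem farkas m n (A : 'M[R]_(m, n)) (b : 'cV[R]_m) :
  ~ (exists z, cvle b (A *m z)) ->
  exists y, [/\ cvle 0 y, y^T *m A = 0 & 0 < (y^T *m b) 0 0].
Proof.
move=> infeas.
pose a i k := if insub k is Some k' then A i k' else 0.
have aE i (k : 'I_n) : a i k = A i k by rewrite /a valK.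
have [[x feas]|] := pselect (exists x, forall i, b i 0 <= dotn n (a i) x).
  case: infeas; exists (\col_k x k) => i; rewrite mxE.
  by rewrite (eq_bigr (fun k : 'I_n => a i k * x k)) => [|k _]; rewrite ?feas ?aE ?mxE.
move=> /farkas_fourier_motzkin[y [y0 ya yb]]; exists (\col_i y i); split.
- by move=> i; rewrite !mxE.
- apply/rowP => k; rewrite !mxE -[RHS](ya k (ltn_ord k)).
  by apply: eq_bigr => i _; rewrite !mxE aE.
- by rewrite mxE (eq_bigr (fun i => y i * b i 0)) // => i _; rewrite !mxE.
Qed.

Lemma dual_feasE m n (A : 'M[R]_(m, n)) (c : 'rV[R]_n) (y : 'cV[R]_m) :
  cvle (col_mx 0 (col_mx c^T (- c^T))) (col_mx 1%:M (col_mx A^T (- A^T)) *m y) <->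
  cvle 0 y /\ y^T *m A = c.
Proof.
rewrite !mul_col_mx mul1mx mulNmx !cvle_col_mx cvleN.
split=> [[y0 [cA Ac]]|[y0 yA]]; split=> //.
  by apply: trmx_inj; rewrite trmx_mul trmxK; apply: cvle_anti.
by rewrite -yA trmx_mul trmxK; split=> i; apply: lexx.
Qed.

Lemma ray_unbounded m n (A : 'M[R]_(m, n)) (b : 'cV[R]_m) (c : 'rV[R]_n) z0 d v :
  cvle b (A *m z0) -> cvle 0 (A *m d) -> (c *m d) 0 0 < 0 ->
  exists2 z, cvle b (A *m z) & (c *m z) 0 0 < v.
Proof.
move=> z0_feas Ad_ge0 cd_lt0.
pose k := (`|(c *m z0) 0 0 - v| + 1) / - (c *m d) 0 0.
have k_ge0 : 0 <= k by rewrite divr_ge0 ?oppr_ge0 ?ltW // addr_ge0.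
have kc : k * (c *m d) 0 0 = - (`|(c *m z0) 0 0 - v| + 1).
  by rewrite /k invrN mulrN mulNr -mulrA mulVf ?lt_eqF // mulr1.
exists (z0 + k *: d); rewrite mulmxDr -scalemxAr.
  move=> i; apply: le_trans (z0_feas i) _; rewrite [X in _ <= X]mxE lerDl mxE.
  by rewrite mulr_ge0 //; have := Ad_ge0 i; rewrite mxE.
by rewrite mxE [X in _ + X]mxE kc; have := ler_norm ((c *m z0) 0 0 - v); lra.
Qed.

Theorem lp_dual m n (A : 'M[R]_(m, n)) (b : 'cV[R]_m) (c : 'rV[R]_n) (v : R) :
  (exists z, cvle b (A *m z)) -> (forall z, cvle b (A *m z) -> v <= (c *m z) 0 0) ->
  exists y, [/\ cvle 0 y, y^T *m A = c & v <= (y^T *m b) 0 0].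
Proof.
move=> [z0 z0_feas] v_lb; apply: contrapT => no_dual.
pose D := col_mx (col_mx 1%:M (col_mx A^T (- A^T))) b^T.
pose e : 'cV_((m + (n + n)) + 1) := col_mx (col_mx 0 (col_mx c^T (- c^T))) v%:M.
have [[y]|] := pselect (exists y, cvle e (D *m y)).
  rewrite mul_col_mx => /cvle_col_mx[/dual_feasE[y0 yA] /(_ 0)].
  by rewrite dotC mxE eqxx mulr1n => yb; apply: no_dual; exists y.
move=> /farkas[w [w0 wD we]].
set r := usubmx (usubmx w); set p := usubmx (dsubmx (usubmx w)).
set q := dsubmx (dsubmx (usubmx w)); set sv := dsubmx w; set s := sv 0 0.
have [/cvle0_vsub[r0 _] /(_ 0)] := cvle0_vsub w0; rewrite mxE -/sv -/s => s0.
have eqD : A *m (q - p) = r + s *: b.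
  have eq0 := congr1 trmx wD.
  rewrite !tr_mul_col_mx -/r -/p -/q -/sv trmx0 !linearD /= !trmx_mul !trmxK in eq0.
  rewrite trmx1 mul1mx linearN /= trmxK mulNmx [sv]mx11_scalar mul_mx_scalar in eq0.
  rewrite mulmxBr; apply/colP => i; move/colP/(_ i): eq0; rewrite /s !mxE; lra.
have eqe : (w^T *m e) 0 0 = v * s - (c *m (q - p)) 0 0.
  rewrite !tr_mul_col_mx -/p -/q -/sv mulmx0 add0r mulmxN -!trmx_mul mul_mx_scalar.
  by rewrite mulmxBr /s !mxE; lra.
rewrite eqe subr_gt0 in we.
move: s0; rewrite le_eqVlt => /orP[/eqP s_eq0|s_pos].
  rewrite -s_eq0 scale0r addr0 in eqD; rewrite -s_eq0 mulr0 in we.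
  have Ad_ge0 : cvle 0 (A *m (q - p)) by rewrite eqD.
  have [z z_feas] := ray_unbounded v z0_feas Ad_ge0 we.
  by apply/negP; rewrite -leNgt v_lb.
have feas : cvle b (A *m (s^-1 *: (q - p))).
  move=> i; rewrite -scalemxAr eqD; move: (r0 i); rewrite /r !mxE => ri.
  by rewrite mulrDr mulKf ?gt_eqF // addrC lerDl mulr_ge0 // invr_ge0 ltW.
have := v_lb _ feas; rewrite -scalemxAr mxE mulrC ler_pdivlMr //; lra.
Qed.
End LinearDuality.

Theorem lp_strong_duality (R : realType) m n
    (A : 'M[R]_(m, n)) (b : 'cV[R]_m) (c : 'rV[R]_n) :
  (exists z, cvle b (A *m z)) ->
  (exists L, forall z, cvle b (A *m z) -> L <= (c *m z) 0 0) ->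
  exists z y, [/\ cvle b (A *m z), cvle 0 y, y^T *m A = c & (c *m z) 0 0 = (y^T *m b) 0 0].
Proof.
move=> [z0 z0_feas] [L L_lb].
pose V := [set (c *m z) 0 0 | z in [set z | cvle b (A *m z)]].
have inf_lb z : cvle b (A *m z) -> inf V <= (c *m z) 0 0.
  move=> z_feas; apply: ge_inf; last by exists z.
  by exists L => _ [z' z'_feas <-]; apply: L_lb.
have [y [y0 yA yb]] := lp_dual (ex_intro _ z0 z0_feas) inf_lb.
(* The primal optimum is attained because the primal is, up to signs, the dual
   of the dual problem max {b^T y' | y' >= 0, y'^T A = c}, whose value is at most inf V. *)
pose D := col_mx 1%:M (col_mx A^T (- A^T)).
pose e : 'cV_(m + (n + n)) := col_mx 0 (col_mx c^T (- c^T)).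
have dual_feas : exists y', cvle e (D *m y') by exists y; apply/dual_feasE.
have dual_bounded y' : cvle e (D *m y') -> - inf V <= (- b^T *m y') 0 0.
  move=> /dual_feasE[y'0 y'A]; rewrite mulNmx mxE lerN2 -dotC.
  apply: lb_le_inf; first by exists ((c *m z0) 0 0); exists z0.
  by move=> _ [z z_feas <-]; rewrite -y'A -mulmxA; apply: ler_dot.
have [w [w0 wD we]] := lp_dual dual_feas dual_bounded.
set r := usubmx w; set p := usubmx (dsubmx w); set q := dsubmx (dsubmx w).
have [r0 _] := cvle0_vsub w0.
have eqA : A *m (q - p) = b + r.
  have eq0 := congr1 trmx wD.
  rewrite !tr_mul_col_mx -/r -/p -/q !linearD /= !trmx_mul !trmxK trmx1 mul1mx in eq0.
  rewrite linearN /= trmxK mulNmx linearN /= trmxK in eq0.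
  rewrite mulmxBr; apply/colP => i; move/colP/(_ i): eq0; rewrite !mxE; lra.
have z_feas : cvle b (A *m (q - p)).
  by rewrite eqA => i; move: (r0 i); rewrite /r !mxE lerDl.
have z_le : (c *m (q - p)) 0 0 <= inf V.
  move: we; rewrite !tr_mul_col_mx -/p -/q mulmx0 add0r mulmxN -!trmx_mul mulmxBr.
  by rewrite !mxE; lra.
exists (q - p), y; split=> //; apply/le_anti.
by rewrite (le_trans z_le yb) /= -yA -mulmxA ler_dot.
Qed.

Section TwoStageRobust.
Variables (R : realType) (mx nx p mu nu my ny : nat).
Variables (A : 'M[R]_(p, mx + nx)) (b : 'cV[R]_p).
Variables (F : 'cV[R]_(mx + nx) -> 'M[R]_(mu, nu)) (h : 'cV[R]_mu)
          (G : 'M[R]_(mu, mx + nx)).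
Variables (B1 : 'M[R]_(my, mx + nx)) (B2 : 'M[R]_(my, ny)) (d : 'cV[R]_my).
Variables (c1 : 'rV[R]_(mx + nx)) (c2 : 'rV[R]_ny) (Ehat : 'M[R]_(ny, nu)).

Local Notation X := (ts_Xset A b).
Local Notation U := (ts_Uset F h G).
Local Notation Y := (ts_Yset B1 B2 d).
Local Notation c2hat := (ts_c2hat c2 Ehat).

Definition inner_dual_feas x (y : 'cV[R]_ny) (l : 'cV[R]_mu) : Prop :=
  ts_cvge l 0 /\ ts_cvge ((F x)^T *m l - Ehat^T *m y) 0.

Lemma c2hatE u y : ts_sdot (c2hat u) y = ts_sdot c2 y + ts_sdot (Ehat *m u)^T y.
Proof. by rewrite /ts_sdot /ts_c2hat mulmxDl mxE addrC. Qed.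

Lemma inner_weak_duality x u y l : U x u -> inner_dual_feas x y l ->
  ts_sdot (Ehat *m u)^T y <= ts_sdot (h + G *m x)^T l.
Proof.
move=> [u0 Fu] [l0 /subv_ge0 Fl]; rewrite /ts_sdot trmx_mul -mulmxA.
apply: le_trans (ler_dot u0 Fl) _.
by rewrite mulmxA -trmx_mul dotC [X in _ <= X]dotC; apply: ler_dot.
Qed.

Lemma inner_strong_duality x y : U x !=set0 ->
  (exists M, forall u, U x u -> forall i, `|u i 0| <= M) ->
  exists l, inner_dual_feas x y l /\
    exists2 u, U x u & ts_sdot (Ehat *m u)^T y = ts_sdot (h + G *m x)^T l.
Proof.
move=> [u0 Uu0] [M u_bnd].
pose A1 := col_mx (- F x) 1%:M.
pose b1 : 'cV_(mu + nu) := col_mx (- (h + G *m x)) 0.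
pose c := - (y^T *m Ehat).
have UE u : cvle b1 (A1 *m u) <-> U x u.
  rewrite /A1 /b1 mul_col_mx mulNmx mul1mx cvle_col_mx cvleN.
  by split=> -[]; split.
have U_feas : exists u, cvle b1 (A1 *m u) by exists u0; apply/UE.
have U_lb : exists L, forall u, cvle b1 (A1 *m u) -> L <= (c *m u) 0 0.
  exists (- \sum_i `|c 0 i| * M) => u /UE Uu.
  rewrite mxE -sumrN; apply: ler_sum => i _; apply: lerNnormlW.
  by rewrite normrM ler_wpM2l ?u_bnd.
have [u [w [/UE Uu w0 wA wb]]] := lp_strong_duality U_feas U_lb.
have [l0 nu0] := cvle0_vsub w0.
exists (usubmx w); split.
  split=> //; rewrite (_ : _ - _ = dsubmx w) //.
  have eq0 := congr1 trmx wA.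
  rewrite tr_mul_col_mx !linearD /= !trmx_mul !trmxK trmx1 mul1mx in eq0.
  rewrite /c !linearN /= trmx_mul trmxK mulNmx in eq0.
  by apply/colP => i; move/colP/(_ i): eq0; rewrite !mxE; lra.
exists u => //; rewrite /ts_sdot dotC [RHS]dotC.
move: wb; rewrite tr_mul_col_mx mulmx0 addr0 mulmxN /c mulNmx -mulmxA.
by rewrite !mxE => /oppr_inj.
Qed.

Hypothesis U_neq0 : forall x, X x -> U x !=set0.
Hypothesis U_bounded : forall x, X x -> exists M, forall u, U x u -> forall i, `|u i 0| <= M.

Local Notation valMIP := (ts_valMIP A b F h G B1 B2 d c1 c2 Ehat).

Hypothesis MIP_finite : valMIP \is a fin_num.

Lemma MIP_lb x u y : X x -> U x u -> Y x y ->
  fine valMIP <= ts_sdot c1 x + ts_sdot (c2hat u) y.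
Proof.
move=> Xx Uu Yy; rewrite -lee_fin fineK //.
by apply: ereal_inf_lbound; exists (x, (u, y)).
Qed.

Definition joint_mx x : 'M[R]_((ny + my) + (mu + nu), ny + mu) :=
  col_mx (col_mx (row_mx 1%:M 0) (row_mx B2 0))
         (col_mx (row_mx 0 1%:M) (row_mx (- Ehat^T) (F x)^T)).
Definition joint_rhs x : 'cV[R]_((ny + my) + (mu + nu)) :=
  col_mx (col_mx 0 (d - B1 *m x)) (col_mx 0 0).
Definition joint_cost x : 'rV[R]_(ny + mu) := row_mx c2 (h + G *m x)^T.

Lemma joint_feasE x y l : cvle (joint_rhs x) (joint_mx x *m col_mx y l) <->
  Y x y /\ inner_dual_feas x y l.
Proof.
rewrite !mul_col_mx !mul_row_col !mul1mx !mul0mx !addr0 add0r mulNmx.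
by rewrite [X in col_mx l X]addrC !cvle_col_mx.
Qed.

Lemma joint_costE x y l :
  (joint_cost x *m col_mx y l) 0 0 = ts_sdot c2 y + ts_sdot (h + G *m x)^T l.
Proof. by rewrite mul_row_col mxE. Qed.

(* An optimal dual multiplier u of the constraints F(x)^T l >= Ehat^T y of the
   joint LP lies in U(x); with an optimal (y, l) it forms a saddle point. *)
Lemma joint_lp_saddle x : X x -> Y x !=set0 ->
  exists y l u, [/\ Y x y, inner_dual_feas x y l, U x u &
    forall y', Y x y' -> ts_sdot c2 y + ts_sdot (h + G *m x)^T l <= ts_sdot (c2hat u) y'].
Proof.
move=> Xx [y0 Yy0].
have Q_feas : exists z, cvle (joint_rhs x) (joint_mx x *m z).
  have [l [feas _]] := inner_strong_duality y0 (U_neq0 Xx) (U_bounded Xx).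
  by exists (col_mx y0 l); apply/joint_feasE.
have Q_lb : exists L, forall z, cvle (joint_rhs x) (joint_mx x *m z) ->
    L <= (joint_cost x *m z) 0 0.
  have [u0 Uu0] := U_neq0 Xx.
  exists (fine valMIP - ts_sdot c1 x) => z; rewrite -(vsubmxK z) => /joint_feasE[Yy feas].
  have := MIP_lb Xx Uu0 Yy; have := inner_weak_duality Uu0 feas.
  by rewrite joint_costE c2hatE; lra.
have [z [w [z_feas w0 wA wb]]] := lp_strong_duality Q_feas Q_lb.
move: z_feas wb; rewrite -(vsubmxK z) joint_costE => /joint_feasE[Yy feas].
set al := usubmx (usubmx w); set mw := dsubmx (usubmx w).
set be := usubmx (dsubmx w); set u := dsubmx (dsubmx w).
rewrite !tr_mul_col_mx !mulmx0 !addr0 add0r -/mw => value.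
have [/cvle0_vsub[al0 mw0] /cvle0_vsub[be0 u0]] := cvle0_vsub w0.
move: wA; rewrite !tr_mul_col_mx !mul_mx_row !add_row_mx -/al -/mw -/be -/u.
move=> /eq_row_mx[E1 E2]; rewrite !mulmx1 !mulmx0 !addr0 !add0r mulmxN in E1 E2.
have Uu : U x u.
  split=> //; apply/subv_ge0; rewrite (_ : _ - _ = be) //.
  by apply: trmx_inj; rewrite linearB /= trmx_mul -E2 addrK.
have c2hat_u : c2hat u = al^T + mw^T *m B2.
  by rewrite /ts_c2hat -E1 trmx_mul addrC addrNK.
exists (usubmx z), (dsubmx z), u; split=> // y' [y'0 By'].
rewrite value c2hat_u /ts_sdot mulmxDl [X in _ <= X]mxE -[X in X <= _]add0r.
apply: lerD; first by have := ler_dot al0 y'0; rewrite mulmx0 mxE.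
by rewrite -mulmxA; apply: ler_dot.
Qed.

Local Open Scope ereal_scope.

Local Notation Usup x y := (ereal_sup [set (ts_sdot (Ehat *m u)^T y)%:E | u in U x]).
Local Notation obj1 := (ts_obj1 F h G B1 B2 d c1 c2 Ehat).
Local Notation obj2 := (ts_obj2 F h G c1 c2 Ehat).
Local Notation obj3 := (ts_obj3 h G c1 c2).
Local Notation val1 := (ts_val1 A b F h G B1 B2 d c1 c2 Ehat).
Local Notation val2 := (ts_val2 A b F h G B1 B2 d c1 c2 Ehat).
Local Notation val3 := (ts_val3 A b F h G B1 B2 d c1 c2 Ehat).
Local Notation opt1 := (ts_opt1 A b F h G B1 B2 d c1 c2 Ehat).
Local Notation opt2 := (ts_opt2 A b F h G B1 B2 d c1 c2 Ehat).
Local Notation opt3 := (ts_opt3 A b F h G B1 B2 d c1 c2 Ehat).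

Lemma Usup_le x y l : inner_dual_feas x y l -> Usup x y <= (ts_sdot (h + G *m x)^T l)%:E.
Proof.
by move=> feas; apply: ge_ereal_sup => _ [u Uu <-]; rewrite lee_fin inner_weak_duality.
Qed.

Lemma obj2_le_obj3 x y l : inner_dual_feas x y l -> obj2 x y <= (obj3 x y l)%:E.
Proof. by move=> feas; rewrite EFinD leeD2l // Usup_le. Qed.

Lemma obj2_eq_obj3 x y : X x ->
  exists l, inner_dual_feas x y l /\ obj2 x y = (obj3 x y l)%:E.
Proof.
move=> Xx; have [l [feas [u Uu ul]]] := inner_strong_duality y (U_neq0 Xx) (U_bounded Xx).
exists l; split=> //; apply/le_anti; rewrite obj2_le_obj3 //= EFinD leeD2l //.
by apply: ereal_sup_ubound; exists u; rewrite ?ul.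
Qed.

Lemma val2_eq_val3 : val2 = val3.
Proof.
apply/le_anti/andP; split.
- apply: le_ereal_inf_tmp => _ [[[x y] l] /= [Xx Yy Fl l0] <-].
  by apply: le_trans (obj2_le_obj3 (conj l0 Fl)); apply: ereal_inf_lbound; exists (x, y).
- apply: le_ereal_inf_tmp => _ [[x y] /= [Xx Yy] <-].
  have [l [[l0 Fl] ->]] := obj2_eq_obj3 y Xx.
  by apply: ereal_inf_lbound; exists (x, y, l).
Qed.

Lemma opt2_iff_opt3 x : opt2 x <-> opt3 x.
Proof.
split=> [[y [Xx Yy opt]]|[y [l [[Xx Yy Fl l0] opt]]]].
  have [l [[l0 Fl] eq23]] := obj2_eq_obj3 y Xx.
  by exists y, l; split; [split | rewrite -eq23 opt val2_eq_val3].
exists y; split=> //; apply/le_anti; rewrite ereal_inf_lbound /=; last by exists (x, y).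
by rewrite val2_eq_val3 -opt obj2_le_obj3.
Qed.

Lemma obj1_le_obj2 x y : X x -> Y x y -> obj1 x <= obj2 x y.
Proof.
move=> Xx Yy; have [l [feas ->]] := obj2_eq_obj3 y Xx.
rewrite /ts_obj1 /ts_obj3 -addrA EFinD leeD2l //.
apply: ge_ereal_sup => _ [u Uu <-]; apply: ge_ereal_inf.
exists (ts_sdot (c2hat u) y)%:E; first by exists y.
by rewrite lee_fin c2hatE lerD2l inner_weak_duality.
Qed.

Lemma obj1_Yset0 x : X x -> Y x = set0 -> obj1 x = +oo.
Proof.
move=> Xx Y0; have [u Uu] := U_neq0 Xx.
by rewrite /ts_obj1 ereal_supy ?addey //; exists u; rewrite // Y0 image_set0 ereal_inf0.
Qed.

Lemma ex_obj2_le_obj1 x : X x -> Y x !=set0 -> exists2 y, Y x y & obj2 x y <= obj1 x.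
Proof.
move=> Xx Yn0; have [y [l [u [Yy feas Uu saddle]]]] := joint_lp_saddle Xx Yn0.
exists y => //; apply: le_trans (obj2_le_obj3 feas) _.
rewrite /ts_obj1 /ts_obj3 -addrA EFinD leeD2l //; apply: le_ereal_sup_tmp.
exists (ereal_inf [set (ts_sdot (c2hat u) y')%:E | y' in Y x]); first by exists u.
by apply: le_ereal_inf_tmp => _ [y' Yy' <-]; rewrite lee_fin saddle.
Qed.

Lemma MIP_feasible : exists x y, X x /\ Y x y.
Proof.
apply: contrapT => infeas.
have MIP_pinfty : valMIP = +oo.
  apply/ereal_inf_pinfty => z [[x [u y]] /= [Xx [_ Yy]] _].
  by case: infeas; exists x, y.
by move: MIP_finite; rewrite MIP_pinfty.
Qed.

Lemma val1_lt_pinfty : val1 < +oo.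
Proof.
have [x [y [Xx Yy]]] := MIP_feasible; have [l [_ obj23]] := obj2_eq_obj3 y Xx.
apply: le_lt_trans (ereal_inf_lbound _) _; first by exists x.
by apply: le_lt_trans (obj1_le_obj2 Xx Yy) _; rewrite obj23 ltry.
Qed.

Lemma val1_eq_val2 : val1 = val2.
Proof.
apply/le_anti/andP; split.
- apply: le_ereal_inf_tmp => _ [[x y] /= [Xx Yy] <-].
  by apply: le_trans (obj1_le_obj2 Xx Yy); apply: ereal_inf_lbound; exists x.
- apply: le_ereal_inf_tmp => _ [x Xx <-].
  have [Y0|/set0P Yn0] := eqVneq (Y x) set0; first by rewrite obj1_Yset0 ?leey.
  have [y Yy obj21] := ex_obj2_le_obj1 Xx Yn0.
  by apply: le_trans obj21; apply: ereal_inf_lbound; exists (x, y).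
Qed.

Lemma opt1_iff_opt2 x : opt1 x <-> opt2 x.
Proof.
split=> [[Xx opt1x]|[y [Xx Yy opt2xy]]]; last first.
  split=> //; apply/le_anti; rewrite ereal_inf_lbound /=; last by exists x.
  by rewrite val1_eq_val2 -opt2xy obj1_le_obj2.
have [Y0|/set0P Yn0] := eqVneq (Y x) set0.
  by have := val1_lt_pinfty; rewrite -opt1x obj1_Yset0 ?ltxx.
have [y Yy obj21] := ex_obj2_le_obj1 Xx Yn0; exists y; split=> //.
by apply/le_anti; rewrite -val1_eq_val2 -opt1x obj21 obj1_le_obj2.
Qed.

End TwoStageRobust.

Theorem proposition5 (R : realType) (mx nx p mu nu my ny : nat)
  (A : 'M[R]_(p, mx + nx)) (b : 'cV[R]_p)
  (F : 'cV[R]_(mx + nx) -> 'M[R]_(mu, nu)) (h : 'cV[R]_mu) (G : 'M[R]_(mu, mx + nx))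
  (B1 : 'M[R]_(my, mx + nx)) (B2 : 'M[R]_(my, ny)) (d : 'cV[R]_my)
  (c1 : 'rV[R]_(mx + nx)) (c2 : 'rV[R]_ny) (Ehat : 'M[R]_(ny, nu)) :
  (* U(x) nonempty and bounded for every x in X *)
  (forall x, ts_Xset A b x -> ts_Uset F h G x !=set0) ->
  (forall x, ts_Xset A b x -> exists M : R, forall u, ts_Uset F h G x u -> forall i, `|u i 0| <= M) ->
  (* the mixed integer program min{c1 x + ts_c2hat(u) y} has a finite optimal value *)
  ts_valMIP A b F h G B1 B2 d c1 c2 Ehat \is a fin_num ->
  [/\ ts_val1 A b F h G B1 B2 d c1 c2 Ehat = ts_val2 A b F h G B1 B2 d c1 c2 Ehat,
      ts_val2 A b F h G B1 B2 d c1 c2 Ehat = ts_val3 A b F h G B1 B2 d c1 c2 Ehat,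
      (forall x, ts_opt1 A b F h G B1 B2 d c1 c2 Ehat x <-> ts_opt2 A b F h G B1 B2 d c1 c2 Ehat x)
    & (forall x, ts_opt2 A b F h G B1 B2 d c1 c2 Ehat x <-> ts_opt3 A b F h G B1 B2 d c1 c2 Ehat x)].
Proof.
move=> U_neq0 U_bounded MIP_finite; split.
- exact: val1_eq_val2.
- exact: val2_eq_val3.
- exact: opt1_iff_opt2.
- exact: opt2_iff_opt3.
Qed.
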